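(* Let $(V,\|\cdot\|)$ be a normed plane, let $x,y\in V$ be distinct, and suppose there is a line $l$ with $l\subseteq\mathrm{bis}(x,y)$. Then for any nondegenerate segment $[zw]\subseteq l$ whose midpoint is $\frac{x+y}{2}$, we have $\langle xy\rangle\subseteq\mathrm{bis}(z,w)$.
   Context: A normed (Minkowski) plane $(V,\|\cdot\|)$ is a two-dimensional real vector space with a norm. For $x,y\in V$, $[xy]$ denotes the closed segment and $\langle xy\rangle$ the line through $x,y$. For distinct $x,y$, $\mathrm{bis}(x,y)=\{z\in V:\|z-x\|=\|z-y\|\}$. *)

(* classical reals.  A normed plane is modelled as R^2 = R*R
   equipped with an arbitrary norm (every 2-dim real normed space is
   linearly isometric to such a space). *)
From Stdlib Require Import Reals.
Open Scope R_scope.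

Definition pt := (R * R)%type.

Definition vadd (p q : pt) : pt := (fst p + fst q, snd p + snd q).
Definition vsub (p q : pt) : pt := (fst p - fst q, snd p - snd q).
Definition vscale (t : R) (p : pt) : pt := (t * fst p, t * snd p).
Definition vzero : pt := (0, 0).

Definition is_norm (N : pt -> R) : Prop :=
  (forall p, 0 <= N p) /\
  (forall p, N p = 0 -> p = vzero) /\
  (forall t p, N (vscale t p) = Rabs t * N p) /\
  (forall p q, N (vadd p q) <= N p + N q).

Definition bis (N : pt -> R) (x y : pt) : pt -> Prop :=
  fun z => N (vsub z x) = N (vsub z y).

Definition line_through (a b : pt) : pt -> Prop :=
  fun p => exists t : R, p = vadd a (vscale t (vsub b a)).

Definition is_line (l : pt -> Prop) : Prop :=
  exists p d : pt, d <> vzero /\ forall q, l q <-> exists t : R, q = vadd p (vscale t d).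

Definition segment (a b : pt) : pt -> Prop :=
  fun p => exists t : R, 0 <= t <= 1 /\ p = vadd a (vscale t (vsub b a)).

Definition midpoint (a b : pt) : pt := vscale (/2) (vadd a b).

Definition subset (A B : pt -> Prop) : Prop := forall p, A p -> B p.

(* Write x = m - u, y = m + u, z = m - v, w = m + v with m the common
   midpoint.  The line l passes through z and w, hence consists of the points
   m + b v, and l ⊆ bis(x,y) says N(u + b v) = N(u - b v) for every b.
   Pulling the factor a out of N(v ± a u) turns this into N(v + a u) = N(v - a u)
   for every a, which is ⟨xy⟩ ⊆ bis(z,w) since the points of ⟨xy⟩ are m + a u. *)
From Stdlib Require Import Reals Lra.
Open Scope R_scope.

Ltac pt_field :=
  repeat match goal with p : pt |- _ => destruct p end;
  unfold vadd, vsub, vscale, vzero, midpoint; simpl; f_equal; field; auto.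

Lemma line_through_subset_line (l : pt -> Prop) (z w : pt) :
  is_line l -> l z -> l w -> subset (line_through z w) l.
Proof.
  intros [p [d [_ Hl]]] Hz Hw q [t ->].
  apply Hl in Hz as [a ->]; apply Hl in Hw as [b ->].
  apply Hl; exists (a + t * (b - a)); pt_field.
Qed.

Lemma midpoint_eq_reflect (x y z w : pt) :
  midpoint z w = midpoint x y -> w = vsub (vadd x y) z.
Proof.
  destruct x, y, z, w; unfold midpoint, vadd, vsub, vscale; simpl.
  intros [= H1 H2]; f_equal; lra.
Qed.

Section NormedPlane.

Variable N : pt -> R.
Hypothesis HN : is_norm N.

Lemma normZ (t : R) (p : pt) : N (vscale t p) = Rabs t * N p.
Proof. apply HN. Qed.

Lemma norm_vsubC (p q : pt) : N (vsub p q) = N (vsub q p).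
Proof.
  replace (vsub p q) with (vscale (-1) (vsub q p)) by pt_field.
  rewrite normZ, Rabs_left by lra; ring.
Qed.

Lemma norm_balanced_swap (u v : pt) :
  (forall b, N (vadd u (vscale b v)) = N (vsub u (vscale b v))) ->
  forall a, N (vadd v (vscale a u)) = N (vsub v (vscale a u)).
Proof.
  intros Hu a.
  destruct (Req_dec a 0) as [-> | Ha].
  - replace (vadd v (vscale 0 u)) with v by pt_field.
    replace (vsub v (vscale 0 u)) with v by pt_field.
    reflexivity.
  - replace (vadd v (vscale a u)) with (vscale a (vadd u (vscale (/ a) v)))
      by pt_field.
    replace (vsub v (vscale a u)) with (vscale (- a) (vsub u (vscale (/ a) v)))
      by pt_field.
    rewrite !normZ, Rabs_Ropp, Hu; reflexivity.
Qed.

End NormedPlane.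

Theorem lemma2p2 (N : pt -> R) (HN : is_norm N) (x y : pt) (Hxy : x <> y)
  (l : pt -> Prop) (Hl : is_line l) (Hlb : subset l (bis N x y))
  (z w : pt) (Hzw : z <> w) (Hseg : subset (segment z w) l)
  (Hmid : midpoint z w = midpoint x y) :
  subset (line_through x y) (bis N z w).
Proof.
  (* Neither [x <> y] nor [z <> w] is needed: degenerate cases hold as well. *)
  assert (Hzwl : subset (line_through z w) l).
  { apply line_through_subset_line; [exact Hl | |];
      apply Hseg; [exists 0 | exists 1]; split; try lra; pt_field. }
  apply midpoint_eq_reflect in Hmid; subst w.
  set (m := midpoint x y).
  set (u := vscale (/ 2) (vsub y x)).
  set (v := vscale (/ 2) (vsub (vsub (vadd x y) z) z)).
  assert (Hbal : forall b, N (vadd u (vscale b v)) = N (vsub u (vscale b v))).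
  { intro b.
    assert (Hc : bis N x y (vadd m (vscale b v))).
    { apply Hlb, Hzwl; exists ((1 + b) / 2); unfold m, v; pt_field. }
    unfold bis in Hc; rewrite (norm_vsubC N HN _ y) in Hc.
    replace (vadd u (vscale b v)) with (vsub (vadd m (vscale b v)) x)
      by (unfold m, u, v; pt_field).
    replace (vsub u (vscale b v)) with (vsub y (vadd m (vscale b v)))
      by (unfold m, u, v; pt_field).
    exact Hc. }
  intros q [s ->]; unfold bis.
  rewrite (norm_vsubC N HN _ (vsub (vadd x y) z)).
  replace (vsub (vadd x (vscale s (vsub y x))) z)
    with (vadd v (vscale (2 * s - 1) u)) by (unfold u, v; pt_field).
  replace (vsub (vsub (vadd x y) z) (vadd x (vscale s (vsub y x))))
    with (vsub v (vscale (2 * s - 1) u)) by (unfold u, v; pt_field).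
  exact (norm_balanced_swap N HN u v Hbal _).
Qed.
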